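(* Let $G$, $w$, $\nu$ be as in the context, and let $\mathcal{S}=(S_m)_{m=0,\ldots,n}$ be a partition of $V(G)$ with $K_m(\mathcal{S})>0$ for all $m=0,\ldots,n-1$. Then for all $1\le p<\infty$ and all $f\in\ell^p_\nu(G)$ with $f|_{S_0}=0$, \[ \|f|_{V(G)\setminus S_0}\|_{p,\nu}\le\delta_{\mathcal{S},p}\|\nabla_w f\|_p, \] and for all bounded $f$ with $f|_{S_0}=0$, \[ \|f|_{V(G)\setminus S_0}\|_\infty\le n\,\|\nabla_w f\|_\infty. \]
   Context: $G$ is an undirected weighted graph: $V(G)$ is a (countable) vertex set and $w:V(G)\times V(G)\to[0,\infty)$ is symmetric with $w(u,u)=0$; edges are pairs with $w(u,v)\neq0$. $\nu:V(G)\to(0,\infty)$ is a fixed vertex weight; $\ell^p_\nu(G)$, $\|f\|_{p,\nu}=\left(\sum_v|f(v)|^p\nu(v)\right)^{1/p}$, $\|f|_A\|_{p,\nu}$ the same sum over $v\in A$; $\|f|_A\|_\infty=\sup_{v\in A}|f(v)|$. $\|\nabla_w f\|_p=\left(\sum_{u,v\in V(G)}|f(u)-f(v)|^pw(u,v)\right)^{1/p}$ for $p<\infty$, and $\|\nabla_w f\|_\infty=\sup\{|f(u)-f(v)|: w(u,v)>0\}$. $w_A(v)=\sum_{u\in A}w(u,v)$. $D_m=\sup_{v\in S_m}\frac{w_{S_{m+1}}(v)}{\nu(v)}$, $K_m=\inf_{v\in S_{m+1}}\frac{w_{S_m}(v)}{\nu(v)}$, and $\delta_{\mathcal{S},p}=\max_{k=1,\ldots,n}\left(\frac{1}{K_{k-1}}\sum_{m=k}^n\prod_{i=k}^{m-1}\frac{D_i}{K_i}\right)$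 for $p=1$, $\delta_{\mathcal{S},p}=\left(\sum_{m=1}^n\left(\sum_{k=1}^mK_{k-1}^{-q/p}\left(\prod_{i=k}^{m-1}\frac{D_i}{K_i}\right)^{q/p}\right)^{p/q}\right)^{1/p}$ for $1<p<\infty$, $1/p+1/q=1$. Empty products equal $1$, empty sums equal $0$. *)

From mathcomp Require Import all_boot all_order all_algebra.
From mathcomp Require Import all_classical all_reals all_analysis.
Set Implicit Arguments. Unset Strict Implicit. Unset Printing Implicit Defensive.
Import Order.TTheory GRing.Theory Num.Theory.
Local Open Scope classical_set_scope.
Local Open Scope ring_scope.
Local Open Scope ereal_scope.

Section Defs.
Context {R : realType} {V : countType}.
Implicit Types (w : V -> V -> R) (nu : V -> R) (f : V -> R) (A : set V).

Definition lp_norm_on (p : R) nu f A : \bar R :=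
  poweR (\esum_(v in A) (powR `|f v| p * nu v)%:E) p^-1.

Definition linf_norm_on f A : \bar R :=
  ereal_sup [set (`|f v|)%:E | v in A].

Definition grad_norm (p : R) w f : \bar R :=
  poweR (\esum_(uv in [set: V * V]) (powR `|f uv.1 - f uv.2| p * w uv.1 uv.2)%:E) p^-1.

Definition grad_norm_inf w f : \bar R :=
  ereal_sup [set (`|f uv.1 - f uv.2|)%:E | uv in [set uv : V * V | (0 < w uv.1 uv.2)%R]].

Definition wA w A (v : V) : \bar R := \esum_(u in A) (w u v)%:E.

Definition Dm w nu (S : nat -> set V) (m : nat) : \bar R :=
  ereal_sup [set wA w (S m.+1) v * ((nu v)^-1)%:E | v in S m].

Definition Km w nu (S : nat -> set V) (m : nat) : \bar R :=
  ereal_inf [set wA w (S m) v * ((nu v)^-1)%:E | v in S m.+1].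

Definition ratio_prod w nu S (k m : nat) : \bar R :=
  \prod_(k <= i < m) (Dm w nu S i * ((fine (Km w nu S i))^-1)%:E).

Definition delta w nu S (n : nat) (p : R) : \bar R :=
  if p == 1%R then
    \big[maxe/0]_(1 <= k < n.+1)
      (((fine (Km w nu S k.-1))^-1)%:E *
        \sum_(k <= m < n.+1) ratio_prod w nu S k m)
  else
    let q := (p / (p - 1))%R in
    poweR (\sum_(1 <= m < n.+1)
       poweR (\sum_(1 <= k < m.+1)
                ((powR (fine (Km w nu S k.-1)) (- (q / p)))%:E *
                 poweR (ratio_prod w nu S k m) (q / p)))
             (p / q)) p^-1.

End Defs.

From mathcomp Require Import all_boot all_order all_algebra.
From mathcomp Require Import all_classical all_reals all_analysis.
From mathcomp Require Import ring lra.
Set Implicit Arguments. Unset Strict Implicit. Unset Printing Implicit Defensive.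
Import Order.TTheory GRing.Theory Num.Theory.
Local Open Scope classical_set_scope.
Local Open Scope ring_scope.

(* Each [v] in the layer [S (m+1)] satisfies [K_m nu(v) <= w_{S_m}(v)], and
   [|f v| <= |f v - f u| + |f u|] for its neighbours [u] in [S_m]; so Minkowski's inequality
   in the space of edges between the two layers, weighted by [w], gives
     K_m^(1/p) ||f|_{S_(m+1)}|| <= ||grad f|_{S_(m+1) x S_m}|| + D_m^(1/p) ||f|_{S_m}||.
   Unrolling this recursion from [f|_{S_0} = 0] bounds ||f|_{S_m}|| by the layer gradients
   with weights K_(k-1)^(-1/p) (prod_(i=k)^(m-1) D_i/K_i)^(1/p).  Summing over [m] (for
   [p = 1]), or applying Hoelder's inequality first (for [p > 1]), gives [delta], because
   the edge sets [S_k x S_(k-1)] are disjoint.  For [p = oo], every vertex of [S_m] reaches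
   [S_0] along [m] edges, which exist since [K_i > 0]. *)

Section powR_lemmas.
Context {R : realType}.
Implicit Types p r s x y : R.

Lemma powRV s r : 0 < s -> s^-1 `^ r = s `^ (- r).
Proof. by move=> s0; rewrite -powR_inv1 ?ltW// -powRrM mulN1r. Qed.

Lemma powRK p x : 0 < p -> 0 <= x -> (x `^ p) `^ p^-1 = x.
Proof. by move=> p0 x0; rewrite -powRrM mulfV ?gt_eqF// powRr1. Qed.

Lemma powRVK p x : 0 < p -> 0 <= x -> (x `^ p^-1) `^ p = x.
Proof. by move=> p0 x0; rewrite -powRrM mulVf ?gt_eqF// powRr1. Qed.

(* Convexity of [t |-> t ^ p] applied to [a + b = l (a / l) + (1 - l) (b / (1 - l))]. *)
Lemma powRD_le_weighted p (l a b : R) : 1 <= p -> 0 < l < 1 -> 0 <= a -> 0 <= b ->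
  (a + b) `^ p <= l `^ (1 - p) * a `^ p + (1 - l) `^ (1 - p) * b `^ p.
Proof.
move=> p1 /andP[l0 l1] a0 b0; have l'0 : 0 < 1 - l by rewrite subr_gt0.
have scale (c x : R) : 0 < c -> 0 <= x -> c * (x / c) `^ p = c `^ (1 - p) * x `^ p.
  move=> c0 x0; rewrite powRM ?invr_ge0 ?(ltW c0)// powRV// mulrCA mulrC -{1}(powRr1 (ltW c0)).
  by rewrite -powRD// (gt_eqF c0) implybT.
have conv : (l * (a / l) + (1 - l) * (b / (1 - l))) `^ p <=
    l * (a / l) `^ p + (1 - l) * (b / (1 - l)) `^ p.
  by apply: (convex_powR p1 (Itv01 (ltW l0) (ltW l1))); rewrite inE /= in_itv /= andbT divr_ge0// ltW.
have -> : a + b = l * (a / l) + (1 - l) * (b / (1 - l)).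
  by rewrite [l * _]mulrCA [(1 - l) * _]mulrCA !mulfV ?gt_eqF// !mulr1.
by rewrite -(scale l a)// -(scale (1 - l) b).
Qed.

(* Minkowski's inequality for two terms, in the dual form obtained by optimising
   [powRD_le_weighted] over [l]: take [l = x / (x + y)] with [x, y] the [p]-th roots of
   [X, Y], shifted by [e / 2] to stay away from [0]. *)
Lemma powRV_le_add_weighted p (X Y Z : R) : 1 <= p -> 0 <= X -> 0 <= Y -> 0 <= Z ->
  (forall l, 0 < l < 1 -> Z <= l `^ (1 - p) * X + (1 - l) `^ (1 - p) * Y) ->
  Z `^ p^-1 <= X `^ p^-1 + Y `^ p^-1.
Proof.
move=> p1 X0 Y0 Z0 HZ; have p0 : 0 < p by apply: lt_le_trans p1.
have [x x0 Xx] : exists2 x, 0 <= x & X = x `^ p by exists (X `^ p^-1); rewrite ?powR_ge0 ?powRVK.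
have [y y0 Yy] : exists2 y, 0 <= y & Y = y `^ p by exists (Y `^ p^-1); rewrite ?powR_ge0 ?powRVK.
subst X Y; rewrite !powRK//.
have weight (c s : R) : 0 < c -> 0 < s -> (c / s) `^ (1 - p) * c `^ p = c * s `^ (p - 1).
  move=> c0 s0; rewrite powRM ?invr_ge0 ?(ltW c0) ?(ltW s0)// powRV// mulrAC.
  by rewrite -powRD ?(gt_eqF c0) ?implybT// subrK powRr1 ?(ltW c0)// opprB.
apply/ler_addgt0Pr => e e0; set x' := x + e / 2; set y' := y + e / 2.
have x'0 : 0 < x' by rewrite ltr_wpDl ?divr_gt0.
have y'0 : 0 < y' by rewrite ltr_wpDl ?divr_gt0.
have -> : x + y + e = x' + y' by rewrite /x' /y'; field.
set s := x' + y'; have s0 : 0 < s by rewrite addr_gt0.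
have l01 : 0 < x' / s < 1 by rewrite divr_gt0//= ltr_pdivrMr// mul1r ltrDl.
have ly : 1 - x' / s = y' / s.
  by apply: (@mulIf _ s); rewrite ?gt_eqF// mulrBl !mulfVK ?gt_eqF// mul1r addrAC subrr add0r.
have Zs : Z <= s `^ p.
  apply: le_trans (HZ _ l01) _; rewrite ly.
  apply: (@le_trans _ _ ((x' / s) `^ (1 - p) * x' `^ p + (y' / s) `^ (1 - p) * y' `^ p)).
    by apply: lerD; apply: ler_wpM2l; rewrite ?powR_ge0//;
      apply: ge0_ler_powR; rewrite ?nnegrE ?(ltW p0) ?(ltW x'0) ?(ltW y'0) ?lerDl ?divr_ge0 ?(ltW e0).
  by rewrite !weight// -mulrDl mulr_powRB1 ?(ltW s0).
rewrite -(powRK p0 (ltW s0)).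
by apply: ge0_ler_powR; rewrite ?nnegrE ?powR_ge0 ?invr_ge0 ?(ltW p0).
Qed.

Lemma hoelder_seq (I : Type) p q (r : seq I) (a b : I -> R) :
  0 < p -> 0 < q -> p^-1 + q^-1 = 1 -> (forall i, 0 <= a i) -> (forall i, 0 <= b i) ->
  \sum_(i <- r) a i * b i <=
  (\sum_(i <- r) a i `^ p) `^ p^-1 * (\sum_(i <- r) b i `^ q) `^ q^-1.
Proof.
move=> p0 q0 pq a0 b0; elim: r => [|i r IH].
  by rewrite !big_nil powR0 ?mul0r// invr_neq0// gt_eqF.
rewrite !big_cons; apply: le_trans (lerD (lexx (a i * b i)) IH) _.
have A0 : 0 <= \sum_(j <- r) a j `^ p by apply: sumr_ge0 => j _; exact: powR_ge0.
have B0 : 0 <= \sum_(j <- r) b j `^ q by apply: sumr_ge0 => j _; exact: powR_ge0.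
have := hoelder2 (a0 i) (powR_ge0 (\sum_(j <- r) a j `^ p) p^-1) (b0 i)
  (powR_ge0 (\sum_(j <- r) b j `^ q) q^-1) p0 q0 pq.
by rewrite (powRVK p0 A0) (powRVK q0 B0).
Qed.

End powR_lemmas.

Section ereal_lemmas.
Context {R : realType}.
Local Open Scope ereal_scope.

Lemma ehoelder_seq_pinfty (I : choiceType) (p q : R) (r : seq I) (a b : I -> \bar R) j :
  (0 < p)%R -> (0 < q)%R -> (forall i, 0 <= a i) -> (forall i, 0 <= b i) ->
  j \in r -> a j = +oo ->
  \sum_(i <- r) a i * b i <=
  (\sum_(i <- r) a i `^ p) `^ p^-1 * (\sum_(i <- r) b i `^ q) `^ q^-1.
Proof.
move=> p0 q0 a0 b0 jr ajy.
have -> : \sum_(i <- r) a i `^ p = +oo.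
  apply/esum_eqyP; last by exists j; rewrite ajy poweRyr ?gt_eqF.
  by move=> i _; rewrite gt_eqF// (lt_le_trans _ (poweR_ge0 _ _)) ?ltNy0.
rewrite poweRyr ?invr_neq0 ?gt_eqF//.
set B := \sum_(i <- r) b i `^ q.
have [B0|] := eqVneq (B `^ q^-1) 0; last first.
  by move=> Bneq0; rewrite gt0_mulye ?leey// lt0e Bneq0 poweR_ge0.
have /eqP : B = 0.
  by apply: (poweR_eq0_eq0 _ B0); apply: sume_ge0 => i _; exact: poweR_ge0.
rewrite seq_psume_eq0// => [/allP b0r|i _]; last exact: poweR_ge0.
rewrite B0 mule0 big_seq big1// => i /b0r /eqP /poweR_eq0_eq0 -> //; exact: mule0.
Qed.

Lemma ehoelder_seq (I : choiceType) (p q : R) (r : seq I) (a b : I -> \bar R) :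
  (0 < p)%R -> (0 < q)%R -> (p^-1 + q^-1 = 1)%R ->
  (forall i, 0 <= a i) -> (forall i, 0 <= b i) ->
  \sum_(i <- r) a i * b i <=
  (\sum_(i <- r) a i `^ p) `^ p^-1 * (\sum_(i <- r) b i `^ q) `^ q^-1.
Proof.
move=> p0 q0 pq a0 b0.
have pinfty (F : I -> \bar R) i : (forall i, 0 <= F i) -> ~~ (F i \is a fin_num) -> F i = +oo.
  by move=> F0; rewrite ge0_fin_numE// ltey negbK => /eqP.
have [/allP afin|/allPn[j jr /(pinfty _ _ a0) ajy]] := boolP (all (fun i => a i \is a fin_num) r);
  last exact: ehoelder_seq_pinfty ajy.
have [/allP bfin|/allPn[j jr /(pinfty _ _ b0) bjy]] := boolP (all (fun i => b i \is a fin_num) r);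
  last by rewrite muleC (eq_bigr _ (fun i _ => muleC (a i) (b i))); exact: ehoelder_seq_pinfty bjy.
have sumEFin_in (F : I -> \bar R) (G : I -> R) :
    {in r, forall i, F i = (G i)%:E} -> \sum_(i <- r) F i = (\sum_(i <- r) G i)%:E.
  by move=> FG; rewrite -sumEFin; apply: eq_big_seq.
rewrite (sumEFin_in _ (fun i => fine (a i) * fine (b i))%R); last first.
  by move=> i ir; rewrite EFinM !fineK ?afin ?bfin.
rewrite (sumEFin_in _ (fun i => fine (a i) `^ p)%R); last first.
  by move=> i ir; rewrite -poweR_EFin fineK ?afin.
rewrite (sumEFin_in _ (fun i => fine (b i) `^ q)%R); last first.
  by move=> i ir; rewrite -poweR_EFin fineK ?bfin.
by rewrite !poweR_EFin -EFinM lee_fin; apply: hoelder_seq => // i; exact: fine_ge0.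
Qed.

Lemma poweRV_le_add_weighted (p : R) (X Y Z : \bar R) : (1 <= p)%R ->
  0 <= X -> 0 <= Y -> 0 <= Z ->
  (forall l : R, (0 < l < 1)%R ->
     Z <= (l `^ (1 - p))%:E * X + ((1 - l) `^ (1 - p))%:E * Y) ->
  Z `^ p^-1 <= X `^ p^-1 + Y `^ p^-1.
Proof.
move=> p1 X0 Y0 Z0 HZ; have p0 : (0 < p)%R by apply: lt_le_trans p1.
have pi0 : (p^-1 != 0)%R by rewrite invr_neq0 ?gt_eqF.
have ninfty (x : \bar R) : x `^ p^-1 != -oo.
  by rewrite gt_eqF// (lt_le_trans _ (poweR_ge0 _ _)) ?ltNy0.
case: X X0 HZ => [x| |//] X0 HZ; last by rewrite poweRyr// addye ?leey.
case: Y Y0 HZ => [y| |//] Y0 HZ; last by rewrite poweRyr// addey ?leey.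
have l01 : (0 < (2^-1 : R) < 1)%R by apply/andP; split; lra.
case: Z Z0 HZ => [z| |//] Z0 HZ; last first.
  by move/(_ _ l01): HZ; rewrite -!EFinM -EFinD leye_eq.
rewrite !poweR_EFin -EFinD lee_fin.
by apply: powRV_le_add_weighted; rewrite -?lee_fin.
Qed.

Lemma ge0_lee_poweR (r : R) (x y : \bar R) : (0 <= r)%R -> 0 <= x -> x <= y ->
  x `^ r <= y `^ r.
Proof.
move=> r0 x0 xy; apply: gt0_ler_poweR => //; rewrite in_itv /= leey andbT//.
exact: le_trans xy.
Qed.

Lemma poweR_prod (I : eqType) (r : seq I) (F : I -> \bar R) (s : R) :
  {in r, forall i, 0 <= F i} -> (\prod_(i <- r) F i) `^ s = \prod_(i <- r) F i `^ s.
Proof.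
elim: r => [_|i r IH F0]; first by rewrite !big_nil poweR1r.
have {}F0 j : j \in i :: r -> 0 <= F j by exact: F0.
rewrite !big_cons poweRM ?IH ?F0 ?mem_head// => [j jr|]; first by rewrite F0// inE jr orbT.
by rewrite big_seq; apply: prode_ge0 => j jr; rewrite F0// inE jr orbT.
Qed.

Lemma unroll_recurrence (a g x y : nat -> \bar R) N :
  a 0%N = 0 -> (forall m, 0 <= a m) -> (forall m, 0 <= g m) ->
  (forall m, 0 <= x m) -> (forall m, 0 <= y m) ->
  (forall m, (m < N)%N -> a m.+1 <= x m * (g m + y m * a m)) ->
  forall m, (m <= N)%N ->
  a m <= \sum_(1 <= k < m.+1) x k.-1 * \prod_(k <= i < m) (y i * x i) * g k.-1.
Proof.
move=> a0 a_ge0 g0 x0 y0 rec; elim=> [_|m IH mN]; first by rewrite a0 big_geq.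
have yx0 i : 0 <= y i * x i by exact: mule_ge0.
have term0 k m' : 0 <= x k.-1 * \prod_(k <= i < m') (y i * x i) * g k.-1.
  by rewrite !mule_ge0//; exact: prode_ge0.
apply: le_trans (rec m mN) _.
rewrite big_nat_recr//= [\prod_(_ <= _ < _) _]big_geq// mule1 ge0_muleDr ?mule_ge0// addeC leeD2r//.
apply: le_trans (lee_wpmul2l (x0 m) (lee_wpmul2l (y0 m) (IH (ltnW mN)))) _.
rewrite !ge0_sume_distrr// 1?le_eqVlt; last by move=> k _; rewrite mule_ge0.
apply/orP; left; apply/eqP/eq_big_nat => k /andP[_ km].
rewrite big_nat_recr//= muleA [x m * y m]muleC [in RHS]muleA muleA.
by congr (_ * _); exact: muleC.
Qed.

Lemma sume_triangle_exchange (F : nat -> nat -> \bar R) N :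
  \sum_(1 <= m < N.+1) \sum_(1 <= k < m.+1) F k m =
  \sum_(1 <= k < N.+1) \sum_(k <= m < N.+1) F k m.
Proof.
elim: N => [|N IH]; first by rewrite !big_geq.
rewrite big_nat_recr// IH [in RHS]big_nat_recr//=.
rewrite [X in _ = X + _](eq_big_nat _ _ (F2 := fun k =>
  \sum_(k <= m < N.+1) F k m + F k N.+1)); last first.
  by move=> k /andP[_ kN]; rewrite big_nat_recr// ltnW.
rewrite big_split/= big_nat1 -addeA; congr (_ + _).
by rewrite big_nat_recr.
Qed.

End ereal_lemmas.

Section esum_lemmas.
Context {R : realType} {T : choiceType}.
Local Open Scope ereal_scope.
Implicit Types (a : T -> \bar R) (I J : set T).

Lemma esumZl_le (c : \bar R) I a : 0 <= c -> (forall i, I i -> 0 <= a i) ->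
  \esum_(i in I) (c * a i) <= c * \esum_(i in I) a i.
Proof.
move=> c0 a0; apply: ge_ereal_sup => _ [X [finX XI] <-].
rewrite fsbig_finite//= big_seq -ge0_sume_distrr; last first.
  by move=> i; rewrite in_fset_set// inE => /XI /a0.
rewrite -big_seq -fsbig_finite//; apply: lee_wpmul2l => //.
by apply: ereal_sup_ubound; exists X.
Qed.

Lemma esumZl (c : R) I a : (0 <= c)%R -> (forall i, I i -> 0 <= a i) ->
  \esum_(i in I) (c%:E * a i) = c%:E * \esum_(i in I) a i.
Proof.
move=> c0 a0; apply/eqP; rewrite eq_le esumZl_le ?lee_fin//=.
have [->|cn0] := eqVneq c 0%R.
  by rewrite mul0e; apply: esum_ge0 => i _; rewrite mul0e.
have cp : (0 < c)%R by rewrite lt_neqAle eq_sym cn0.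
have ca0 i : I i -> 0 <= c%:E * a i by move=> Ii; rewrite mule_ge0 ?lee_fin ?a0.
have := @esumZl_le (c^-1)%:E I (fun i => c%:E * a i) _ ca0.
under eq_esum do rewrite muleA -EFinM mulVf// mul1e.
rewrite lee_fin invr_ge0 (ltW cp) => /(_ isT) /(lee_wpmul2l (ltW cp : 0 <= c%:E)).
by rewrite muleA -EFinM mulfV// mul1e.
Qed.

Lemma esum_swap (T1 T2 : choiceType) (I : set T1) (J : set T2)
    (a : T1 * T2 -> \bar R) :
  \esum_(z in I `*` J) a z = \esum_(z in J `*` I) a (z.2, z.1).
Proof.
apply: (reindex_esum (J `*` I) (I `*` J) (fun z => (z.2, z.1))); split.
- by move=> [x y] [/= Jx Iy].
- by move=> [x y] [x' y'] _ _ /= [-> ->].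
- by move=> [x y] [/= Ix Jy]; exists (y, x).
Qed.

Lemma sum_esum_disjoint_le (I : eqType) (r : seq I)
    (X : I -> set T) (Y : set T) (a : T -> \bar R) :
  uniq r -> (forall i, i \in r -> X i `<=` Y) ->
  (forall i j z, i \in r -> j \in r -> X i z -> X j z -> i = j) ->
  (forall z, Y z -> 0 <= a z) ->
  \sum_(i <- r) \esum_(z in X i) a z <= \esum_(z in Y) a z.
Proof.
elim: r Y => [|i r IH] Y /= u XY dis a0; first by rewrite big_nil esum_ge0.
move/andP: u => [ir ur]; have ir' : i \in i :: r := mem_head i r.
rewrite big_cons (esumID (X i) Y)// (_ : Y `&` X i = X i); last exact/setIidr/XY.
apply: leeD2l; apply: IH => // [j jr z Xjz|j k z jr kr|z []]; last by move=> /a0.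
- split; first by apply: (XY j _ z Xjz); rewrite inE jr orbT.
  by move=> Xiz; move: ir; rewrite (dis i j z ir') ?inE ?jr ?orbT.
- by apply: dis; rewrite inE ?jr ?kr orbT.
Qed.

End esum_lemmas.

Section layers.
Local Open Scope ereal_scope.
Variables (R : realType) (V : countType) (w : V -> V -> R) (nu : V -> R)
  (S : nat -> set V) (n : nat).
Hypothesis w_ge0 : forall u v, (0 <= w u v)%R.
Hypothesis w_sym : forall u v, w u v = w v u.
Hypothesis nu_gt0 : forall v, (0 < nu v)%R.
Hypothesis S_partition : forall v, exists! m, (m <= n)%N /\ S m v.
Hypothesis K_pos : forall m, (m < n)%N -> 0 < Km w nu S m < +oo.

Definition Kreal m := fine (Km w nu S m).

Lemma S_layer_uniq m1 m2 v : (m1 <= n)%N -> (m2 <= n)%N -> S m1 v -> S m2 v -> m1 = m2.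
Proof.
move=> m1n m2n Sv1 Sv2; have [m [_ mE]] := S_partition v.
by rewrite -(mE m1 (conj m1n Sv1)) (mE m2 (conj m2n Sv2)).
Qed.

Lemma S_layer_exists v : exists2 m, (m <= n)%N & S m v.
Proof. by have [m [[mn Smv] _]] := S_partition v; exists m. Qed.

Lemma Kreal_gt0 m : (m < n)%N -> (0 < Kreal m)%R.
Proof. by move=> mn; apply: fine_gt0; exact: K_pos. Qed.

Lemma KrealE m : (m < n)%N -> (Kreal m)%:E = Km w nu S m.
Proof.
move=> mn; have /andP[K0 Ky] := K_pos mn.
by rewrite fineK// ge0_fin_numE// ltW.
Qed.

Lemma wA_ge0 A v : 0 <= wA w A v.
Proof. by apply: esum_ge0 => u _; rewrite lee_fin. Qed.

Lemma Kreal_le_wA m v : (m < n)%N -> S m.+1 v -> (Kreal m * nu v)%:E <= wA w (S m) v.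
Proof.
move=> mn Sv; have : Km w nu S m <= wA w (S m) v * ((nu v)^-1)%:E.
  by apply: ereal_inf_lbound; exists v.
by rewrite -(KrealE mn) lee_pdivlMr.
Qed.

Lemma exists_edge_down m v : (m < n)%N -> S m.+1 v -> exists2 u, S m u & (0 < w u v)%R.
Proof.
move=> mn Sv; have [//|no_edge] := pselect (exists2 u, S m u & (0 < w u v)%R).
have : wA w (S m) v = 0.
  apply: esum1 => u Su; congr (_%:E); apply/eqP; rewrite eq_le w_ge0 andbT leNgt.
  by apply/negP => wp; apply: no_edge; exists u.
move: (Kreal_le_wA mn Sv) => /[swap] ->.
by rewrite lee_fin leNgt mulr_gt0 ?Kreal_gt0.
Qed.

Lemma S_succ_nonempty m : (m < n)%N -> exists v, S m.+1 v.
Proof.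
move=> mn; apply/not_existsP => S_empty; have /andP[_] := K_pos mn.
suff -> : Km w nu S m = +oo by [].
rewrite /Km -ereal_inf0; congr ereal_inf.
by apply/seteqP; split => // x [v Sv _]; exact: (S_empty v).
Qed.

Lemma Dm_ge0 m : (m < n)%N -> 0 <= Dm w nu S m.
Proof.
move=> mn; have [v Sv] := S_succ_nonempty mn; have [u Su _] := exists_edge_down mn Sv.
apply: (@le_trans _ _ (wA w (S m.+1) u * ((nu u)^-1)%:E)).
  by rewrite mule_ge0 ?wA_ge0// lee_fin invr_ge0 ltW.
by apply: ereal_sup_ubound; exists u.
Qed.

Lemma ratio_ge0 i : (i < n)%N -> 0 <= Dm w nu S i * ((Kreal i)^-1)%:E.
Proof.
by move=> i_n; rewrite mule_ge0 ?Dm_ge0// lee_fin invr_ge0 (ltW (Kreal_gt0 i_n)).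
Qed.

Lemma ratio_prod_ge0 k m : (m <= n)%N -> 0 <= ratio_prod w nu S k m.
Proof.
move=> mn; rewrite /ratio_prod big_seq; apply: prode_ge0 => i.
by rewrite mem_index_iota => /andP[_ im]; exact: ratio_ge0 (leq_trans im mn).
Qed.

Lemma wA_le_Dm m u : S m u -> wA w (S m.+1) u <= Dm w nu S m * (nu u)%:E.
Proof.
move=> Su; rewrite -lee_pdivrMr//.
by apply: ereal_sup_ubound; exists u.
Qed.

Lemma layer_abs_le_grad_inf (f : V -> R) : (forall v, S 0%N v -> f v = 0%R) ->
  forall m v, (m <= n)%N -> S m v -> (`|f v|)%:E <= m%:R%:E * grad_norm_inf w f.
Proof.
move=> f0; set M := grad_norm_inf w f.
have edge_le u v : (0 < w u v)%R -> (`|f u - f v|)%:E <= M.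
  by move=> wp; apply: ereal_sup_ubound; exists (u, v).
elim=> [v _ /f0 ->|m IH v mn Sv]; first by rewrite normr0 mul0e.
have [u Su wp] := exists_edge_down mn Sv.
have M0 : 0 <= M by apply: le_trans (edge_le _ _ wp); rewrite lee_fin.
rewrite -addn1 natrD EFinD ge0_muleDl ?lee_fin// mul1e.
apply: (@le_trans _ _ ((`|f u|)%:E + (`|f v - f u|)%:E)).
  by rewrite -EFinD lee_fin -{1}(subrK (f u) (f v)) addrC ler_normD.
by apply: leeD; [exact: IH (ltnW mn) Su|apply: edge_le; rewrite w_sym].
Qed.

Lemma linf_norm_le (f : V -> R) : (forall v, S 0%N v -> f v = 0%R) ->
  linf_norm_on f (~` S 0%N) <= n%:R%:E * grad_norm_inf w f.
Proof.
move=> f0; apply: ge_ereal_sup => _ [v S0v <-].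
have [m mn Smv] := S_layer_exists v.
have m0 : (0 < m)%N by rewrite lt0n; apply/eqP => m0; apply: S0v; rewrite -m0.
apply: le_trans (layer_abs_le_grad_inf f0 mn Smv) _.
have m1n : (m.-1 < n)%N by rewrite (leq_trans _ mn)// ltn_predL.
have Sv' : S m.-1.+1 v by rewrite prednK.
have [u _ wp] := exists_edge_down m1n Sv'.
apply: lee_wpmul2r; last by rewrite lee_fin ler_nat.
apply: le_trans (_ : (`|f u - f v|)%:E <= _); first by rewrite lee_fin.
by apply: ereal_sup_ubound; exists (u, v).
Qed.

Section lp.
Variables (p : R) (f : V -> R).
Hypothesis p_ge1 : (1 <= p)%R.
Hypothesis f_S0 : forall v, S 0%N v -> f v = 0%R.

Definition layer_normp m := \esum_(v in S m) (`|f v| `^ p * nu v)%:E.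
Definition layer_gradp m :=
  \esum_(z in S m.+1 `*` S m) (`|f z.1 - f z.2| `^ p * w z.1 z.2)%:E.
Definition layer_crossp m := \esum_(z in S m.+1 `*` S m) (`|f z.2| `^ p * w z.1 z.2)%:E.
Definition gradp := \esum_(z in [set: V * V]) (`|f z.1 - f z.2| `^ p * w z.1 z.2)%:E.

Lemma p_gt0 : (0 < p)%R. Proof. exact: lt_le_trans p_ge1. Qed.

Lemma p_inv_neq0 : (p^-1 != 0)%R. Proof. by rewrite invr_neq0// gt_eqF// p_gt0. Qed.

Lemma fnu_ge0 v : 0 <= (`|f v| `^ p * nu v)%:E.
Proof. by rewrite lee_fin mulr_ge0 ?powR_ge0 ?ltW. Qed.

Lemma normp_w_ge0 (x : R) u v : 0 <= (`|x| `^ p * w u v)%:E.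
Proof. by rewrite lee_fin mulr_ge0 ?powR_ge0. Qed.

Lemma layer_normp_ge0 m : 0 <= layer_normp m.
Proof. by apply: esum_ge0 => v _; exact: fnu_ge0. Qed.

Lemma layer_gradp_ge0 m : 0 <= layer_gradp m.
Proof. by apply: esum_ge0 => z _; exact: normp_w_ge0. Qed.

Lemma layer_crossp_ge0 m : 0 <= layer_crossp m.
Proof. by apply: esum_ge0 => z _; exact: normp_w_ge0. Qed.

Lemma gradp_ge0 : 0 <= gradp.
Proof. by apply: esum_ge0 => z _; exact: normp_w_ge0. Qed.

Lemma layer_normp0 : layer_normp 0 = 0.
Proof.
by apply: esum1 => v /f_S0 ->; rewrite normr0 powR0 ?mul0r// gt_eqF// p_gt0.
Qed.

Lemma Kreal_layer_normp_le m : (m < n)%N ->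
  (Kreal m)%:E * layer_normp m.+1 <=
  \esum_(z in S m.+1 `*` S m) (`|f z.1| `^ p * w z.2 z.1)%:E.
Proof.
move=> mn; rewrite /layer_normp -esumZl ?(ltW (Kreal_gt0 mn))// => [|v _]; last exact: fnu_ge0.
rewrite -(@esum_esum _ _ _ (S m.+1) (fun=> S m) (fun v u => (`|f v| `^ p * w u v)%:E));
  last by move=> v u _ _; exact: normp_w_ge0.
apply: le_esum => v Sv; under eq_esum do rewrite EFinM.
rewrite esumZl ?powR_ge0// => [|u _]; last by rewrite lee_fin.
by rewrite -EFinM mulrCA EFinM lee_wpmul2l ?lee_fin ?powR_ge0// Kreal_le_wA.
Qed.

Lemma layer_normp_le_weighted m l : (m < n)%N -> (0 < l < 1)%R ->
  (Kreal m)%:E * layer_normp m.+1 <=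
  (l `^ (1 - p))%:E * layer_gradp m + ((1 - l) `^ (1 - p))%:E * layer_crossp m.
Proof.
move=> mn l01; apply: le_trans (Kreal_layer_normp_le mn) _.
rewrite /layer_gradp /layer_crossp -!esumZl ?powR_ge0// => [|z _|z _]; last 2 first.
- exact: normp_w_ge0.
- exact: normp_w_ge0.
rewrite -esumD => [|z _|z _]; last 2 first.
- by apply: mule_ge0; [rewrite lee_fin powR_ge0|exact: normp_w_ge0].
- by apply: mule_ge0; [rewrite lee_fin powR_ge0|exact: normp_w_ge0].
apply: le_esum => z _; rewrite -!EFinM -EFinD lee_fin w_sym !mulrA -mulrDl.
apply: ler_wpM2r => //; apply: le_trans (powRD_le_weighted p_ge1 l01 (normr_ge0 _) (normr_ge0 _)).
apply: ge0_ler_powR; rewrite ?nnegrE ?(ltW p_gt0) ?addr_ge0//.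
by rewrite -{1}(subrK (f z.2) (f z.1)) ler_normD.
Qed.

Lemma layer_crossp_le m : (m < n)%N -> layer_crossp m <= Dm w nu S m * layer_normp m.
Proof.
move=> mn; rewrite /layer_crossp esum_swap.
rewrite -(@esum_esum _ _ _ (S m) (fun=> S m.+1) (fun u v => (`|f u| `^ p * w v u)%:E));
  last by move=> u v _ _; exact: normp_w_ge0.
apply: le_trans _ (esumZl_le (Dm_ge0 mn) (fun u _ => fnu_ge0 u)).
apply: le_esum => u Su; under eq_esum do rewrite EFinM.
rewrite esumZl ?powR_ge0// => [|v _]; last by rewrite lee_fin.
rewrite EFinM muleCA; apply: lee_wpmul2l; first by rewrite lee_fin powR_ge0.
exact: wA_le_Dm.
Qed.

Lemma layer_step m : (m < n)%N ->
  (Kreal m `^ p^-1)%:E * layer_normp m.+1 `^ p^-1 <=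
  layer_gradp m `^ p^-1 + Dm w nu S m `^ p^-1 * layer_normp m `^ p^-1.
Proof.
move=> mn; have K0 := Kreal_gt0 mn.
rewrite -poweR_EFin -poweRM ?lee_fin ?(ltW K0) ?layer_normp_ge0//.
rewrite -poweRM ?Dm_ge0 ?layer_normp_ge0//.
apply: le_trans (poweRV_le_add_weighted p_ge1 (layer_gradp_ge0 m) (layer_crossp_ge0 m) _
  (fun l l01 => layer_normp_le_weighted mn l01)) _.
  by rewrite mule_ge0 ?lee_fin ?(ltW K0) ?layer_normp_ge0.
apply: leeD2l; apply: ge0_lee_poweR; rewrite ?invr_ge0 ?(ltW p_gt0) ?layer_crossp_ge0//.
exact: layer_crossp_le.
Qed.

Definition layer_weight k m :=
  (Kreal k.-1 `^ (- p^-1))%:E * ratio_prod w nu S k m `^ p^-1.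

Lemma layer_weight_ge0 k m : 0 <= layer_weight k m.
Proof. by rewrite mule_ge0 ?lee_fin ?powR_ge0 ?poweR_ge0. Qed.

Lemma layer_weightE k m : (m <= n)%N ->
  (Kreal k.-1 `^ (- p^-1))%:E *
    \prod_(k <= i < m) (Dm w nu S i `^ p^-1 * (Kreal i `^ (- p^-1))%:E) =
  layer_weight k m.
Proof.
move=> mn; rewrite /layer_weight /ratio_prod poweR_prod => [|i]; last first.
  by rewrite mem_index_iota => /andP[_ im]; exact: ratio_ge0 (leq_trans im mn).
congr (_ * _); rewrite big_seq [RHS]big_seq; apply: eq_bigr => i.
rewrite mem_index_iota => /andP[_ im]; have i_n : (i < n)%N := leq_trans im mn.
rewrite poweRM ?Dm_ge0 ?lee_fin ?invr_ge0 ?(ltW (Kreal_gt0 i_n))//.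
by rewrite poweR_EFin powRV// Kreal_gt0.
Qed.

Lemma layer_normp_le m : (m <= n)%N ->
  layer_normp m `^ p^-1 <=
  \sum_(1 <= k < m.+1) layer_weight k m * layer_gradp k.-1 `^ p^-1.
Proof.
move=> mn.
have a0 : layer_normp 0 `^ p^-1 = 0 by rewrite layer_normp0 poweR0r// p_inv_neq0.
have x0 i : 0 <= (Kreal i `^ (- p^-1))%:E by rewrite lee_fin powR_ge0.
have rec i : (i < n)%N -> layer_normp i.+1 `^ p^-1 <= (Kreal i `^ (- p^-1))%:E *
    (layer_gradp i `^ p^-1 + Dm w nu S i `^ p^-1 * layer_normp i `^ p^-1).
  move=> i_n; have K0 := Kreal_gt0 i_n.
  have KK : (Kreal i `^ (- p^-1) * Kreal i `^ p^-1 = 1)%R.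
    by rewrite -powRD ?addNr ?powRr0// (gt_eqF K0) implybT.
  rewrite -[leLHS]mul1e -KK EFinM -muleA lee_wpmul2l//; exact: layer_step.
have := unroll_recurrence (a := fun i => layer_normp i `^ p^-1)
  (g := fun i => layer_gradp i `^ p^-1) (x := fun i => (Kreal i `^ (- p^-1))%:E)
  (y := fun i => Dm w nu S i `^ p^-1) a0 (fun=> poweR_ge0 _ _) (fun=> poweR_ge0 _ _)
  x0 (fun=> poweR_ge0 _ _) rec mn.
move/le_trans; apply; rewrite le_eqVlt; apply/orP; left; apply/eqP.
by apply: eq_big_nat => k _; rewrite layer_weightE.
Qed.

Lemma sum_layer_gradp_le : \sum_(1 <= k < n.+1) layer_gradp k.-1 <= gradp.
Proof.
apply: (@sum_esum_disjoint_le _ _ _ (index_iota 1 n.+1) (fun k => S k.-1.+1 `*` S k.-1)).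
- exact: iota_uniq.
- by [].
- move=> i j z; rewrite !mem_index_iota => /andP[i1 iN] /andP[j1 jN] [Si _] [Sj _].
  by rewrite prednK// in Si; rewrite prednK// in Sj; exact: (S_layer_uniq iN jN Si Sj).
- by move=> z _; exact: normp_w_ge0.
Qed.

Lemma esum_compl_S0_le :
  \esum_(v in ~` S 0%N) (`|f v| `^ p * nu v)%:E <= \sum_(1 <= m < n.+1) layer_normp m.
Proof.
have cond_ge0 (A : set V) v : 0 <= if v \in A then (`|f v| `^ p * nu v)%:E else 0.
  by case: ifPn => // _; exact: fnu_ge0.
rewrite esum_mkcond /layer_normp; under eq_bigr do rewrite esum_mkcond.
rewrite -esum_sum => [|v m _ _]; last exact: cond_ge0.
apply: le_esum => v _; case: ifPn => [/[!inE] S0v|_]; last first.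
  by apply: sume_ge0 => m _; exact: cond_ge0.
have [m mn Smv] := S_layer_exists v.
have m0 : (0 < m)%N by rewrite lt0n; apply/eqP => m0; apply: S0v; rewrite -m0.
rewrite (bigD1_seq m) ?iota_uniq ?mem_index_iota ?m0//= ifT ?inE//.
by apply: leeDl; apply: sume_ge0 => k _; exact: cond_ge0.
Qed.

Lemma lp_norm_le_p1 : p = 1%R ->
  lp_norm_on p nu f (~` S 0%N) <= delta w nu S n p * grad_norm p w f.
Proof.
move=> p1; have pinv : (p^-1 = 1)%R by rewrite p1 invr1.
have layer_le m : (m <= n)%N ->
    layer_normp m <= \sum_(1 <= k < m.+1) layer_weight k m * layer_gradp k.-1.
  move=> mn; have := layer_normp_le mn; rewrite pinv poweRe1 ?layer_normp_ge0//.
  by under eq_bigr do rewrite poweRe1 ?layer_gradp_ge0//.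
rewrite /lp_norm_on /grad_norm /delta p1 eqxx -p1 pinv !poweRe1 -/gradp ?gradp_ge0//;
  last by apply: esum_ge0 => v _; exact: fnu_ge0.
apply: le_trans esum_compl_S0_le _.
set dlt := \big[maxe/0]_(1 <= k < n.+1) _.
apply: (@le_trans _ _ (\sum_(1 <= k < n.+1) dlt * layer_gradp k.-1)); last first.
  rewrite -ge0_sume_distrr => [|k _]; last exact: layer_gradp_ge0.
  by apply: lee_wpmul2l; [exact: bigmax_ge_id|exact: sum_layer_gradp_le].
apply: (@le_trans _ _
    (\sum_(1 <= m < n.+1) \sum_(1 <= k < m.+1) layer_weight k m * layer_gradp k.-1)).
  by rewrite big_nat [leRHS]big_nat; apply: lee_sum => m /andP[_ mn]; exact: layer_le.
rewrite sume_triangle_exchange big_nat [leRHS]big_nat; apply: lee_sum => k /andP[k1 kn].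
have kn' : (k.-1 < n)%N by rewrite prednK.
have k_in : k \in index_iota 1 n.+1 by rewrite mem_index_iota k1.
rewrite -ge0_sume_distrl => [|m _]; last exact: layer_weight_ge0.
apply: lee_wpmul2r; first exact: layer_gradp_ge0.
apply: le_trans (le_bigmax_seq _ _ _ _ k_in isT); rewrite le_eqVlt; apply/orP; left.
rewrite big_nat [in X in _ == X]big_nat ge0_sume_distrr => [|m /andP[_ mn]]; last first.
  exact: ratio_prod_ge0.
apply/eqP/eq_bigr => m /andP[_ mn].
by rewrite /layer_weight pinv poweRe1 ?ratio_prod_ge0// powR_inv1// (ltW (Kreal_gt0 kn')).
Qed.

Local Notation q := (p / (p - 1))%R.

Lemma layer_normp_le_hoelder m : (1 < p)%R -> (m <= n)%N ->
  layer_normp m <=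
  (\sum_(1 <= k < m.+1) (Kreal k.-1 `^ (- (q / p)))%:E * ratio_prod w nu S k m `^ (q / p))
    `^ (p / q) * gradp.
Proof.
move=> p_gt1 mn; have p0 := p_gt0; have p10 : (0 < p - 1)%R by rewrite subr_gt0.
have q0 : (0 < q)%R by rewrite divr_gt0.
have pq : (q^-1 + p^-1 = 1)%R by rewrite invf_div; field; rewrite gt_eqF.
have hold := @ehoelder_seq _ _ _ _ (index_iota 1 m.+1) (fun k => layer_weight k m)
  (fun k => layer_gradp k.-1 `^ p^-1) q0 p0 pq (fun k => layer_weight_ge0 k m)
  (fun k => poweR_ge0 _ _).
have -> : layer_normp m = (layer_normp m `^ p^-1) `^ p.
  by rewrite -poweRrM mulVf ?gt_eqF// poweRe1 ?layer_normp_ge0.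
apply: le_trans (ge0_lee_poweR (ltW p0) (poweR_ge0 _ _) (layer_normp_le mn)) _.
apply: le_trans (ge0_lee_poweR (ltW p0) _ hold) _.
  by apply: sume_ge0 => k _; rewrite mule_ge0 ?layer_weight_ge0 ?poweR_ge0.
rewrite poweRM ?poweR_ge0// -!poweRrM [(q^-1 * p)%R]mulrC mulVf ?gt_eqF// poweRe1; last first.
  by apply: sume_ge0 => k _; exact: poweR_ge0.
apply: lee_pmul; rewrite ?poweR_ge0//.
- by apply: sume_ge0 => k _; exact: poweR_ge0.
- rewrite le_eqVlt; apply/orP; left; apply/eqP; congr (_ `^ _); apply: eq_bigr => k _.
  rewrite poweRM ?lee_fin ?powR_ge0 ?poweR_ge0// poweR_EFin -powRrM -poweRrM.
  by rewrite mulNr [(p^-1 * _)%R]mulrC.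
- under eq_bigr do rewrite -poweRrM mulVf ?gt_eqF// poweRe1 ?layer_gradp_ge0//.
  apply: le_trans sum_layer_gradp_le.
  by apply: lee_sum_nneg_natr => // k _ _; exact: layer_gradp_ge0.
Qed.

Lemma lp_norm_le_pgt1 : (1 < p)%R ->
  lp_norm_on p nu f (~` S 0%N) <= delta w nu S n p * grad_norm p w f.
Proof.
move=> p_gt1; rewrite /lp_norm_on /grad_norm /delta gt_eqF//= -/gradp.
set X := \sum_(1 <= m < n.+1) _.
have X0 : 0 <= X by apply: sume_ge0 => m _; exact: poweR_ge0.
rewrite -poweRM ?gradp_ge0//; apply: ge0_lee_poweR.
- by rewrite invr_ge0 ltW// p_gt0.
- by apply: esum_ge0 => v _; exact: fnu_ge0.
apply: le_trans esum_compl_S0_le _.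
rewrite ge0_sume_distrl => [|m _]; last exact: poweR_ge0.
rewrite big_nat [leRHS]big_nat; apply: lee_sum => m /andP[_ mn].
exact: layer_normp_le_hoelder.
Qed.

End lp.
End layers.

Local Open Scope ereal_scope.

Theorem corollary1p5 (R : realType) (V : countType)
  (w : V -> V -> R) (nu : V -> R) (S : nat -> set V) (n : nat) :
  (forall u v, (0 <= w u v)%R) ->
  (forall u v, w u v = w v u) ->
  (forall u, w u u = 0%R) ->
  (forall v, (0 < nu v)%R) ->
  (forall v, exists! m, (m <= n)%N /\ S m v) ->
  (forall m, (m < n)%N -> 0 < Km w nu S m < +oo) ->
  (forall (p : R) (f : V -> R), (1 <= p)%R ->
     \esum_(v in [set: V]) (powR `|f v| p * nu v)%:E < +oo ->
     (forall v, S 0%N v -> f v = 0%R) ->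
     lp_norm_on p nu f (~` S 0%N) <= delta w nu S n p * grad_norm p w f)
  /\
  (forall f : V -> R, (exists M : R, forall v, (`|f v| <= M)%R) ->
     (forall v, S 0%N v -> f v = 0%R) ->
     linf_norm_on f (~` S 0%N) <= (n%:R)%:E * grad_norm_inf w f).
Proof.
move=> w_ge0 w_sym _ nu_gt0 S_part K_pos; split => [p f p_ge1 _ f_S0|f _ f_S0].
- have [p1|p_neq1] := eqVneq p 1%R; first exact: lp_norm_le_p1.
  by apply: lp_norm_le_pgt1; rewrite // lt_neqAle eq_sym p_neq1.
- exact: linf_norm_le.
Qed.
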